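(* Let $M$ be an $\mathfrak{S}_2$-module, where $\mathfrak{S}_2:=\mathbb{Z}[s,t]/\bigl((1-s)(1-t),\,N(s)+N(t)-p\bigr)$, and write $s,t$ also for their actions on $M$. The following are equivalent: (1) $M$ is uniquely $p$-divisible; (2) $M$ is cohomologically trivial and $M=\ker(1-s)\oplus\ker(1-t)$; (3) $1-s$ restricts to an invertible map $\ker(1-t)\to\ker(1-t)$ and $1-t$ restricts to an invertible map $\ker(1-s)\to\ker(1-s)$.
   Context: $p$ is a prime and $N(x)=1+x+\dots+x^{p-1}$. An $\mathfrak{S}_2$-module is cohomologically trivial if $\operatorname{im}(1-t)=\ker(1-s)$ and $\operatorname{im}(1-s)=\ker(1-t)$. Uniquely $p$-divisible: multiplication by $p$ is bijective. *)

From HB Require Import structures.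
From mathcomp Require Import all_boot all_order all_algebra.
Set Implicit Arguments. Unset Strict Implicit. Unset Printing Implicit Defensive.
Import GRing.Theory.
Local Open Scope ring_scope.

Section S2.
Variable M : zmodType.

Definition Nact (p : nat) (f : M -> M) (m : M) : M := \sum_(i < p) iter i f m.

Definition ker1m (f : M -> M) (m : M) : Prop := m - f m = 0.
Definition im1m (f : M -> M) (m : M) : Prop := exists y, m = y - f y.

(* M is an S_2-module, S_2 = Z[s,t]/((1-s)(1-t), N(s)+N(t)-p), with s,t acting
   by the additive maps s,t: these commute (Z[s,t] is commutative) and satisfy
   the two defining relations. *)
Definition S2_module (p : nat) (s t : {additive M -> M}) : Prop :=
  [/\ forall m, s (t m) = t (s m),
      forall m, (m - s m) - t (m - s m) = 0
    & forall m, Nact p s m + Nact p t m = m *+ p].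

Definition uniquely_p_divisible (p : nat) : Prop := bijective (fun m : M => m *+ p).

Definition cohomologically_trivial (s t : M -> M) : Prop :=
  (forall m, im1m t m <-> ker1m s m) /\ (forall m, im1m s m <-> ker1m t m).

Definition internal_direct_sum (A B : M -> Prop) : Prop :=
  (forall m, exists a b, [/\ A a, B b & m = a + b]) /\
  (forall m, A m -> B m -> m = 0).

Definition restricts_invertible (f : M -> M) (K : M -> Prop) : Prop :=
  [/\ forall x, K x -> K (f x),
      forall x y, K x -> K y -> f x = f y -> x = y
    & forall y, K y -> exists2 x, K x & f x = y].

End S2.

From HB Require Import structures.
From mathcomp Require Import all_boot all_order all_algebra ring.
Set Implicit Arguments. Unset Strict Implicit. Unset Printing Implicit Defensive.
Import GRing.Theory.
Local Open Scope ring_scope.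

(* Write a = 1 - s, b = 1 - t and K = ker b.  Since ab = 0, a maps M into K.
   On K we have t = 1, so N(t) = p, hence N(s) = 0 and s^p = 1 there.  Thus on
   K both p = a Q(s), with Q(x) = (p - N(x)) / (1 - x), and a^p = p F(s), by the
   binomial theorem and p | C(p, k) for 0 < k < p.  Polynomials in s commute
   with a and preserve K, so a is invertible on K iff p is; symmetrically for
   b on ker a.  Finally (3) gives M = ker a (+) ker b, on each summand of which
   p is then invertible, while (2) <-> (3) is a direct translation:
   surjectivity of b on ker a is im b = ker a plus M = ker a + ker b, and
   injectivity of a on ker b says that ker a meets ker b only in 0. *)

Lemma iter_morph (T : Type) (f g : T -> T) :
  {morph g : x / f x} -> forall k, {morph g : x / iter k f x}.
Proof. by move=> gf k x; elim: k => //= k <-. Qed.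

Lemma inj_surj_bij (T : choiceType) (U : eqType) (g : T -> U) :
  injective g -> (forall y, exists x, g x = y) -> bijective g.
Proof.
move=> g_inj g_surj; have g_surjb y : exists x, g x == y.
  by have [x <-] := g_surj y; exists x.
exists (fun y => xchoose (g_surjb y)) => [x | y].
  by apply: g_inj; exact: eqP (xchooseP (g_surjb (g x))).
exact: eqP (xchooseP (g_surjb y)).
Qed.

Section Iterates.
Variables (M : zmodType) (f : {additive M -> M}).

Fact iter_is_zmod_morphism k : zmod_morphism (iter k f).
Proof. by elim: k => // k IHk x y; rewrite !iterS IHk raddfB. Qed.

HB.instance Definition _ k :=
  GRing.isZmodMorphism.Build M M (iter k f) (iter_is_zmod_morphism k).

Lemma sum_iter_subr i m :
  \sum_(j < i) iter j f m - f (\sum_(j < i) iter j f m) = m - iter i f m.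
Proof.
elim: i => [|i IHi]; first by rewrite big_ord0 raddf0 !subrr.
by rewrite big_ord_recr raddfD opprD addrACA IHi /= addrA subrK.
Qed.

Lemma Nact_fixed p m : f m = m -> Nact p f m = m *+ p.
Proof.
move=> fm; rewrite /Nact (eq_bigr (fun=> m)) ?sumr_const ?card_ord // => i _.
exact: iter_fix.
Qed.

(* Q(f) for Q(x) = (p - N(x)) / (1 - x) = sum_(i < p) (1 + ... + x^(i-1)). *)
Definition Nquo p m := \sum_(i < p) \sum_(j < i) iter j f m.

Lemma Nquo_subr p m : Nquo p m - f (Nquo p m) = m *+ p - Nact p f m.
Proof.
rewrite /Nquo raddf_sum -sumrB; under eq_bigr => i _ do rewrite sum_iter_subr.
by rewrite sumrB sumr_const card_ord.
Qed.

Lemma Nquo_morph (g : {additive M -> M}) p :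
  {morph g : x / f x} -> {morph g : x / Nquo p x}.
Proof.
move=> gf m; rewrite raddf_sum; apply: eq_bigr => i _.
by rewrite raddf_sum; apply: eq_bigr => j _; exact: iter_morph.
Qed.

Lemma iter_subr_binomial n m :
  iter n (fun x => x - f x) m =
  \sum_(k < n.+1) iter k f m *~ ((-1) ^+ k * 'C(n, k)%:Z).
Proof.
elim: n => [|n IHn]; first by rewrite big_ord1 mulr1z.
have cS k : (-1) ^+ k.+1 * 'C(n.+1, k.+1)%:Z =
    (-1) ^+ k.+1 * 'C(n, k.+1)%:Z - (-1) ^+ k * 'C(n, k)%:Z :> int.
  by rewrite binS PoszD exprS; ring.
have shift : \sum_(k < n.+1) iter k f m *~ ((-1) ^+ k * 'C(n, k)%:Z) =
    m *~ 1 + \sum_(k < n.+1) iter k.+1 f m *~ ((-1) ^+ k.+1 * 'C(n, k.+1)%:Z).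
  rewrite big_ord_recl [in RHS]big_ord_recr /= (bin_small (ltnSn n)).
  by rewrite mulr0 mulr0z addr0 bin0.
rewrite iterS IHn raddf_sum [RHS]big_ord_recl.
under [in RHS]eq_bigr => k _ do rewrite /= cS mulrzBr.
rewrite sumrB addrA -shift; congr (_ - _).
by apply: eq_bigr => k _; rewrite raddfMz.
Qed.

(* The coefficient of x^k in (1 - x)^p reduced modulo x^p - 1, so that
   (1 - f)^p = p * frob_quo p f on the fixed points of f^p. *)
Definition frob_coef p k : int :=
  (-1) ^+ k * 'C(p, k)%:Z + (k == 0)%:Z * (-1) ^+ p.

Lemma dvdz_frob_coef p k : prime p -> (k < p)%N -> (p %| frob_coef p k)%Z.
Proof.
move=> pr; rewrite /frob_coef; case: k => [_ | k lt_kp].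
  rewrite bin0 !mul1r; have [-> // | odd_p] := even_prime pr.
  by rewrite -signr_odd odd_p addrN dvdz0.
rewrite mul0r addr0 dvdz_mull // dvdzE; exact: prime_dvd_bin.
Qed.

Definition frob_quo p m := \sum_(k < p) iter k f m *~ (frob_coef p k %/ p)%Z.

Fact frob_quo_is_zmod_morphism p : zmod_morphism (frob_quo p).
Proof.
by move=> x y; rewrite -sumrB; apply: eq_bigr => k _; rewrite raddfB mulrzBl.
Qed.

HB.instance Definition _ p :=
  GRing.isZmodMorphism.Build M M (frob_quo p) (frob_quo_is_zmod_morphism p).

Lemma frob_quo_morph (g : {additive M -> M}) p :
  {morph g : x / f x} -> {morph g : x / frob_quo p x}.
Proof.
move=> gf m; rewrite raddf_sum; apply: eq_bigr => k _.
by rewrite raddfMz iter_morph.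
Qed.

Lemma iter_subr_prime p m : prime p -> iter p f m = m ->
  iter p (fun x => x - f x) m = frob_quo p m *+ p.
Proof.
move=> pr fixm; rewrite iter_subr_binomial big_ord_recr /= fixm binn mulr1.
rewrite -sumrMnl; under [RHS]eq_bigr => k _ do
  rewrite pmulrn -mulrzA divzK ?dvdz_frob_coef // mulrzDr.
rewrite big_split /=; congr (_ + _).
case: p pr {fixm} => // p _; rewrite big_ord_recl big1 ?addr0 ?mul1r // => k _.
by rewrite mul0r mulr0z.
Qed.

End Iterates.

Section Restriction.
Variable M : zmodType.
Implicit Types (f g h : M -> M) (K : M -> Prop).

Lemma ker1mP f m : ker1m f m <-> f m = m.
Proof.
rewrite /ker1m; split=> [/eqP | ->]; last exact: subrr.
by rewrite subr_eq0 => /eqP <-.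
Qed.

Lemma ker1m_morph f g m : {morph f : x / g x} -> ker1m f m -> ker1m f (g m).
Proof. by move=> fg /ker1mP fm; apply/ker1mP; rewrite fg fm. Qed.

Lemma ker1m0 (f : {additive M -> M}) : ker1m f 0.
Proof. by apply/ker1mP; rewrite raddf0. Qed.

Lemma ker1mB (f : {additive M -> M}) x y :
  ker1m f x -> ker1m f y -> ker1m f (x - y).
Proof. by move=> /ker1mP fx /ker1mP fy; apply/ker1mP; rewrite raddfB fx fy. Qed.

Lemma ker1m_subr_eq (f : {additive M -> M}) x y :
  x - f x = y - f y -> ker1m f (x - y).
Proof.
move=> e; rewrite /ker1m.
by have /= -> := raddfB (idfun \- f) x y; rewrite e subrr.
Qed.

Lemma internal_direct_sum_sym (A B : M -> Prop) :
  internal_direct_sum A B -> internal_direct_sum B A.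
Proof.
case=> decomp cap; split=> [m | m Bm Am]; last exact: cap.
by have [a [b [Aa Bb ->]]] := decomp m; exists b, a; rewrite addrC.
Qed.

Lemma restricts_invertible_comp f g K :
  restricts_invertible f K -> restricts_invertible g K ->
  restricts_invertible (f \o g) K.
Proof.
case=> fK f_inj f_surj [gK g_inj g_surj]; split=> [x Kx | x y Kx Ky | y Ky].
- exact/fK/gK.
- by move/(f_inj _ _ (gK _ Kx) (gK _ Ky)); apply: g_inj.
- have [z Kz <-] := f_surj y Ky; have [x Kx <-] := g_surj z Kz.
  by exists x.
Qed.

Lemma restricts_invertible_iter n f K :
  restricts_invertible f K -> restricts_invertible (iter n f) K.
Proof.
move=> fK; elim: n => [|n IHn]; last exact: restricts_invertible_comp fK IHn.
by split=> // y Ky; exists y.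
Qed.

Lemma restricts_invertible_factor f g h K :
    (forall x, K x -> K (f x)) -> (forall x, K x -> K (h x)) ->
    (forall x, K x -> f (h x) = g x) -> (forall x, K x -> h (f x) = g x) ->
  restricts_invertible g K -> restricts_invertible f K.
Proof.
move=> fK hK fh hf [_ g_inj g_surj]; split=> // [x y Kx Ky fxy | y Ky].
  by apply: g_inj => //; rewrite -hf // -hf // fxy.
by have [x Kx <-] := g_surj y Ky; exists (h x); [apply: hK | apply: fh].
Qed.

Lemma restricts_invertible_bij f g :
  bijective g -> {morph f : x / g x} -> restricts_invertible g (ker1m f).
Proof.
move=> [g' gK g'K] fg; split=> [x | x y _ _ | y Ky]; first exact: ker1m_morph.
  exact: (can_inj gK).
exists (g' y) => //; apply/ker1mP; apply: (can_inj gK).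
by rewrite -fg g'K; apply/ker1mP.
Qed.

Lemma bijective_of_restricts g (f1 f2 : {additive M -> M}) :
    zmod_morphism g -> internal_direct_sum (ker1m f1) (ker1m f2) ->
    restricts_invertible g (ker1m f1) -> restricts_invertible g (ker1m f2) ->
  bijective g.
Proof.
move=> gB [decomp cap] [g1K g1_inj g1_surj] [g2K g2_inj g2_surj].
pose gA : {additive M -> M} := HB.pack g (GRing.isZmodMorphism.Build M M g gB).
have g0 : g 0 = 0 := raddf0 gA.
have gD : {morph g : x y / x + y} := raddfD gA.
apply: inj_surj_bij => [|m]; last first.
  have [u [v [Ku Kv ->]]] := decomp m.
  have [u' _ <-] := g1_surj u Ku; have [v' _ <-] := g2_surj v Kv.
  by exists (u' + v').
move=> x y gxy; apply/eqP; rewrite -subr_eq0; apply/eqP.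
have gm0 : g (x - y) = 0 by rewrite gB gxy subrr.
have [u [v [Ku Kv def_m]]] := decomp (x - y).
have g_u : g u = - g v by apply/eqP; rewrite -addr_eq0 -gD -def_m gm0.
have gu0 : g u = 0.
  apply: cap; first exact: g1K.
  by rewrite g_u -sub0r; apply: ker1mB; [apply: ker1m0 | apply: g2K].
have gv0 : g v = 0 by apply: oppr_inj; rewrite -g_u gu0 oppr0.
have u0 : u = 0 by apply: g1_inj Ku (ker1m0 _) _; rewrite gu0 g0.
have v0 : v = 0 by apply: g2_inj Kv (ker1m0 _) _; rewrite gv0 g0.
by rewrite def_m u0 v0 addr0.
Qed.
End Restriction.

Section S2Module.
Variables (p : nat) (M : zmodType) (s t : {additive M -> M}).
Hypothesis S2 : S2_module p s t.

Lemma S2_commute : {morph t : x / s x}.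
Proof. by case: S2 => st _ _ m; rewrite st. Qed.

Lemma ker1m_subr_s m : ker1m t (m - s m).
Proof. by case: S2 => _ ab _; exact: ab. Qed.

Lemma ker1m_subr_t m : ker1m s (m - t m).
Proof.
rewrite /ker1m -[RHS](ker1m_subr_s m) (raddfB s) (raddfB t) -S2_commute !opprB.
by rewrite addrACA [RHS]addrACA [- t m + _]addrC.
Qed.

Lemma Nact_ker1m m : ker1m t m -> Nact p s m = 0.
Proof.
move=> /ker1mP tm; case: S2 => _ _ /(_ m).
by rewrite (Nact_fixed _ tm) => /(canRL (addrK _)); rewrite subrr.
Qed.

Lemma iter_ker1m m : ker1m t m -> iter p s m = m.
Proof.
move=> Km; apply/eqP; rewrite eq_sym -subr_eq0 -sum_iter_subr.
by rewrite -/(Nact p s m) Nact_ker1m // raddf0 subrr.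
Qed.

Lemma restricts_invertible_subr_mulrn : prime p ->
  restricts_invertible (fun m => m - s m) (ker1m t) <->
  restricts_invertible (fun m => m *+ p) (ker1m t).
Proof.
move=> pr; have mulK m : ker1m t m -> ker1m t (m *+ p).
  exact: (ker1m_morph (g := fun x => x *+ p) (raddfMn t p)).
split=> [inv_subr | inv_mulrn].
- apply: (restricts_invertible_factor (h := frob_quo s p)) mulK _ _ _
    (restricts_invertible_iter p inv_subr) => [x | x Kx | x Kx].
  + by apply: ker1m_morph; apply: frob_quo_morph; exact: S2_commute.
  + by rewrite iter_subr_prime ?iter_ker1m.
  + by rewrite raddfMn iter_subr_prime ?iter_ker1m.
- apply: (restricts_invertible_factor (h := Nquo s p)) _ _ _ _ inv_mulrn
    => [x _ | x | x Kx | x Kx].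
  + exact: ker1m_subr_s.
  + by apply: ker1m_morph; apply: Nquo_morph; exact: S2_commute.
  + by rewrite Nquo_subr Nact_ker1m // subr0.
  + have subr_s_morph : {morph idfun \- s : y / s y}.
      by move=> y /=; rewrite raddfB.
    have /= <- := Nquo_morph p subr_s_morph x.
    by rewrite Nquo_subr Nact_ker1m // subr0.
Qed.

Lemma im1m_ker1m : restricts_invertible (fun m => m - t m) (ker1m s) ->
  forall m, im1m t m <-> ker1m s m.
Proof.
case=> _ _ surj m; split=> [[y ->] | Km]; first exact: ker1m_subr_t.
by have [y _ e] := surj m Km; exists y.
Qed.

Lemma direct_sum_of_restricts :
    restricts_invertible (fun m => m - s m) (ker1m t) ->
    restricts_invertible (fun m => m - t m) (ker1m s) ->
  internal_direct_sum (ker1m s) (ker1m t).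
Proof.
case=> _ inj_s _ [_ _ surj_t]; split=> [m | m Ksm Ktm].
  have [y Ky e] := surj_t _ (ker1m_subr_t m).
  exists y, (m - y); split=> //; last by rewrite addrC subrK.
  by apply: ker1m_subr_eq.
by apply: inj_s => //; [apply: ker1m0 | rewrite raddf0 subr0 Ksm].
Qed.

Lemma restricts_invertible_subr_of_direct_sum :
    (forall m, ker1m t m -> im1m s m) ->
    internal_direct_sum (ker1m s) (ker1m t) ->
  restricts_invertible (fun m => m - s m) (ker1m t).
Proof.
move=> im_s [decomp cap]; split=> [x _ | x y Kx Ky e | y Ky].
- exact: ker1m_subr_s.
- apply/eqP; rewrite -subr_eq0; apply/eqP/cap; first exact: ker1m_subr_eq.
  exact: ker1mB.
- have [z ->] := im_s y Ky; have [u [v [Ku Kv ->]]] := decomp z.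
  by exists v => //; have /= -> := raddfD (idfun \- s) u v; rewrite Ku add0r.
Qed.

End S2Module.

Lemma S2_module_sym (p : nat) (M : zmodType) (s t : {additive M -> M}) :
  S2_module p s t -> S2_module p t s.
Proof.
move=> S2; split=> [m | m | m]; first by rewrite (S2_commute S2).
  exact: ker1m_subr_t S2 m.
by case: S2 => _ _ N; rewrite addrC.
Qed.

Section S2Equivalences.
Variables (p : nat) (M : zmodType) (s t : {additive M -> M}).
Hypothesis S2 : S2_module p s t.

Lemma coh_trivial_direct_sum_iff :
  cohomologically_trivial s t /\ internal_direct_sum (ker1m s) (ker1m t) <->
  restricts_invertible (fun m => m - s m) (ker1m t) /\
  restricts_invertible (fun m => m - t m) (ker1m s).
Proof.
have S2' := S2_module_sym S2.
split=> [[[im_t im_s] ds] | [inv_s inv_t]].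
  split.
    exact: restricts_invertible_subr_of_direct_sum S2 (fun m => (im_s m).2) ds.
  exact: restricts_invertible_subr_of_direct_sum S2' (fun m => (im_t m).2)
    (internal_direct_sum_sym ds).
split; last exact: direct_sum_of_restricts S2 inv_s inv_t.
by split; [exact: im1m_ker1m S2 inv_t | exact: im1m_ker1m S2' inv_s].
Qed.

Lemma uniquely_p_divisible_iff : prime p ->
  uniquely_p_divisible M p <->
  restricts_invertible (fun m => m - s m) (ker1m t) /\
  restricts_invertible (fun m => m - t m) (ker1m s).
Proof.
move=> pr; have inv_st := restricts_invertible_subr_mulrn S2 pr.
have inv_ts := restricts_invertible_subr_mulrn (S2_module_sym S2) pr.
split=> [bij | [inv_s inv_t]].
  split; [apply/inv_st | apply/inv_ts];
    exact: restricts_invertible_bij bij (raddfMn _ p).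
have ds := direct_sum_of_restricts S2 inv_s inv_t.
apply: (bijective_of_restricts (mulrnBl p) ds).
  exact/inv_ts.
exact/inv_st.
Qed.

End S2Equivalences.

Theorem proposition7p7 (p : nat) (M : zmodType) (s t : {additive M -> M}) :
  prime p -> S2_module p s t ->
  [/\ (uniquely_p_divisible M p <->
        cohomologically_trivial s t /\ internal_direct_sum (ker1m s) (ker1m t)),
      (cohomologically_trivial s t /\ internal_direct_sum (ker1m s) (ker1m t) <->
        restricts_invertible (fun m => m - s m) (ker1m t) /\
        restricts_invertible (fun m => m - t m) (ker1m s))
    & (uniquely_p_divisible M p <->
        restricts_invertible (fun m => m - s m) (ker1m t) /\
        restricts_invertible (fun m => m - t m) (ker1m s))].
Proof.
move=> pr S2; have iff13 := uniquely_p_divisible_iff S2 pr.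
have iff23 := coh_trivial_direct_sum_iff S2.
by split=> //; apply: iff_trans iff13 (iff_sym iff23).
Qed.
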